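(* Let $R\subseteq\mathcal{D}^\Sigma$ be an $n$-ary relation ($n=|\Sigma|$) that is join reducible to $N$ factors of arity at most $l$, i.e. $R=R^{\Lambda_1}\Join\dots\Join R^{\Lambda_N}$ for a cover $\Sigma=\Lambda_1\cup\dots\cup\Lambda_N$ with $0<|\Lambda_i|<n$, $|\Lambda_i|\le l$, and suppose $N\le|\mathcal{D}|^{n-l-1}$. Then $\neg R$ is projoin reducible. In particular, if $R$ has a $k$-key with $k\le n-4$ when $|\mathcal{D}|=2$, or with $k\le n-3$ when $|\mathcal{D}|\ge3$, then $\neg R$ is projoin reducible.
   Context: Attributed relation: $R\subseteq\mathcal{D}^\Sigma$, $\Sigma$ finite; $\neg R=\mathcal{D}^\Sigma\setminus R$; $\pi_\Gamma$ restricts tuples to $\Gamma$. The join of $R_i\subseteq\mathcal{D}^{\Lambda_i}$ is $\{a\in\mathcal{D}^{\cup_i\Lambda_i}: a|_{\Lambda_i}\in R_i\ \forall i\}$. A proper subset $\textup{K}\subset\Sigma$ with $|\textup{K}|=k$ is a $k$-key of $R$ if for $a,b\in R$, $a|_{\textup{K}}=b|_{\textup{K}}$ implies $a=b$. $S\subseteq\mathcal{D}^\Sigma$ is projoin reducible if there exist a finite set $\textup{T}$ disjoint from $\Sigma$, a cover $\textup{T}\cup\Sigma=\Lambda_1\cup\dots\cup\Lambda_m$ with $0<|\Lambda_i|<|\Sigma|$, and $S^{\Lambda_i}\subseteq\mathcal{D}^{\Lambda_i}$ with $S=\pi_\Sigma[S^{\Lambda_1}\Join\dots\Join S^{\Lambda_m}]$.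 *)

From mathcomp Require Import all_boot.
Set Implicit Arguments. Unset Strict Implicit. Unset Printing Implicit Defensive.

(* A tuple over a subset Λ ⊆ X (an element of D^Λ) is encoded as a partial
   tuple {ffun X -> option D} whose domain (non-None coordinates) is Λ. *)

Section Rel.
Variables (D X : finType).

Definition ptuple := {ffun X -> option D}.

Definition pdom (t : ptuple) : {set X} := [set x | t x != None].

Definition restr (L : {set X}) (a : {ffun X -> D}) : ptuple :=
  [ffun x => if x \in L then Some (a x) else None].

Definition rel_on (L : {set X}) (R : {set ptuple}) : Prop :=
  forall t, t \in R -> pdom t = L.

Definition join m (L : 'I_m -> {set X}) (Rs : 'I_m -> {set ptuple})
  : {set {ffun X -> D}} :=
  [set a | [forall i, restr (L i) a \in Rs i]].

Definition covers m (L : 'I_m -> {set X}) : Prop :=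
  \bigcup_(i < m) L i = [set: X].
End Rel.

(* projoin reducibility of S ⊆ D^Σ; the extra attributes T are a fresh finite
   type, disjointness from Σ is enforced by using the sum type T + Σ. *)
Definition projoin_reducible (D Sig : finType) (S : {set {ffun Sig -> D}}) : Prop :=
  exists (T : finType) (m : nat) (L : 'I_m -> {set (T + Sig)%type})
         (Rs : 'I_m -> {set ptuple D (T + Sig)%type}),
    [/\ 0 < m, covers L,
        (forall i, 0 < #|L i| < #|Sig|),
        (forall i, rel_on (L i) (Rs i)) &
        S = [set a : {ffun Sig -> D} |
              [exists b in join L Rs, [forall s : Sig, b (inr s) == a s]]]].

Definition join_reducible_to (D Sig : finType) (R : {set {ffun Sig -> D}})
  (N l : nat) : Prop :=
  exists (L : 'I_N -> {set Sig}) (Rs : 'I_N -> {set ptuple D Sig}),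
    [/\ 0 < N, covers L,
        (forall i, 0 < #|L i| < #|Sig| /\ #|L i| <= l),
        (forall i, rel_on (L i) (Rs i)) &
        R = join L Rs].

Definition is_key (D Sig : finType) (R : {set {ffun Sig -> D}}) (K : {set Sig}) : Prop :=
  K \proper [set: Sig] /\
  forall a b : {ffun Sig -> D}, a \in R -> b \in R -> (forall x, x \in K -> a x = b x) -> a = b.

From mathcomp Require Import all_boot zify.

Set Implicit Arguments.
Unset Strict Implicit.
Unset Printing Implicit Defensive.

(* If R = R_1 ⋈ ... ⋈ R_N, then a ∉ R iff a|Λ_i ∉ R_i for some i.  Add a set T
   of t = n - l - 1 fresh attributes whose D-values name an index i (possible
   as N <= |D|^t) and let the i-th factor on T ∪ Λ_i say "if the selector names
   i, then a|Λ_i ∉ R_i".  The join of these factors, projected to Σ, is ¬R, and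
   each factor has arity t + |Λ_i| <= n - 1.  A k-key K yields the
   decomposition of R into the n - k projections onto K ∪ {x}, x ∉ K, of arity
   k + 1; the bounds on k are exactly what makes n - k <= |D|^(n - k - 2). *)

Lemma restr_eqP (D X : finType) (L : {set X}) (a b : {ffun X -> D}) :
  restr L a = restr L b <-> {in L, a =1 b}.
Proof.
split=> [/ffunP eqab x xL | eqab].
- by move: (eqab x); rewrite !ffunE xL => -[].
- by apply/ffunP=> x; rewrite !ffunE; case: ifP => // /eqab ->.
Qed.

Lemma pdom_restr (D X : finType) (L : {set X}) (a : {ffun X -> D}) :
  pdom (restr L a) = L.
Proof. by apply/setP=> x; rewrite inE ffunE; case: (x \in L). Qed.

Lemma rel_on_restr (D X : finType) (L : {set X}) (B : {set {ffun X -> D}}) :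
  rel_on L [set restr L b | b in B].
Proof. by move=> _ /imsetP [b _ ->]; apply: pdom_restr. Qed.

Lemma mem_imset_restr (D X : finType) (L : {set X}) (B : {set {ffun X -> D}})
    (b : {ffun X -> D}) :
  (forall b1 b2 : {ffun X -> D}, {in L, b1 =1 b2} -> b1 \in B -> b2 \in B) ->
  (restr L b \in [set restr L b' | b' in B]) = (b \in B).
Proof.
move=> B_local; apply/imsetP/idP => [[b' b'B /restr_eqP eqbb'] | bB].
- by apply: (B_local b') => // x /eqbb' ->.
- by exists b.
Qed.

Lemma surj_ord (A : finType) (N : nat) :
  0 < N <= #|A| -> exists f : A -> 'I_N, forall i, exists u, f u = i.
Proof.
case/andP=> N_gt0 le_N_A; pose i0 : 'I_N := Ordinal N_gt0.
exists (fun u => insubd i0 (enum_rank u : nat)) => i.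
exists (enum_val (widen_ord le_N_A i)).
by apply: val_inj; rewrite enum_valK val_insubd /= ltn_ord.
Qed.

Section ComplementOfJoin.

Variables (D Sig T : finType) (N : nat).
Variables (L : 'I_N -> {set Sig}) (Rs : 'I_N -> {set ptuple D Sig}).
Variable sel : {ffun T -> D} -> 'I_N.
Hypothesis sel_surj : forall i, exists u, sel u = i.

Definition selector (b : {ffun (T + Sig) -> D}) : {ffun T -> D} :=
  [ffun x => b (inl x)].

Definition payload (b : {ffun (T + Sig) -> D}) : {ffun Sig -> D} :=
  [ffun s => b (inr s)].

Definition cofactor_dom (i : 'I_N) : {set (T + Sig)%type} :=
  (inl @: [set: T]) :|: (inr @: L i).

Definition cofactor_ext (i : 'I_N) : {set {ffun (T + Sig) -> D}} :=
  [set b | (sel (selector b) == i) ==> (restr (L i) (payload b) \notin Rs i)].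

Definition cofactor (i : 'I_N) : {set ptuple D (T + Sig)%type} :=
  [set restr (cofactor_dom i) b | b in cofactor_ext i].

Lemma mem_cofactor i b : (restr (cofactor_dom i) b \in cofactor i) = (b \in cofactor_ext i).
Proof.
apply: mem_imset_restr => b1 b2 eqb; rewrite !inE.
have -> : selector b1 = selector b2.
  by apply/ffunP=> x; rewrite !ffunE eqb // inE imset_f.
suff -> : restr (L i) (payload b1) = restr (L i) (payload b2) by [].
by apply/restr_eqP=> s sL; rewrite !ffunE eqb // inE imset_f ?orbT.
Qed.

Lemma card_cofactor_dom i : #|cofactor_dom i| = #|T| + #|L i|.
Proof.
rewrite cardsU (card_imset _ inl_inj) (card_imset _ inr_inj) cardsT.
suff -> : inl @: [set: T] :&: inr @: L i = set0 by rewrite cards0 subn0.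
by apply/setP=> z; rewrite !inE; apply/andP => -[/imsetP [x _ ->] /imsetP [y _]].
Qed.

Lemma covers_cofactor_dom : 0 < N -> covers L -> covers cofactor_dom.
Proof.
move=> N_gt0 covL; apply/setP=> -[x | s]; rewrite inE; apply/bigcupP.
- by exists (Ordinal N_gt0); rewrite // inE imset_f.
- have /bigcupP [i _ si] : s \in \bigcup_(i < N) L i by rewrite covL inE.
  by exists i; rewrite // inE imset_f ?orbT.
Qed.

Lemma setC_join_projoin :
  ~: join L Rs = [set a : {ffun Sig -> D} |
    [exists b in join cofactor_dom cofactor, [forall s, b (inr s) == a s]]].
Proof.
apply/setP=> a; rewrite !inE; apply/idP/existsP.
- case/forallPn=> i a_notin; have [u sel_u] := sel_surj i.
  pose b : {ffun (T + Sig) -> D} := [ffun z => match z with inl x => u x | inr s => a s end].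
  exists b; rewrite inE; apply/andP; split; last by apply/forallP=> s; rewrite ffunE.
  apply/forallP=> j; rewrite mem_cofactor inE.
  have [-> ->] : selector b = u /\ payload b = a by split; apply/ffunP=> x; rewrite !ffunE.
  by rewrite sel_u; apply/implyP=> /eqP <-.
- case=> b /andP [bJ /forallP ba].
  have -> : a = payload b by apply/ffunP=> s; rewrite ffunE (eqP (ba s)).
  apply/forallP=> inR; move: bJ; rewrite inE => /forallP /(_ (sel (selector b))).
  by rewrite mem_cofactor inE eqxx inR.
Qed.

End ComplementOfJoin.

Lemma projoin_reducible_setC_join (D Sig : finType) (R : {set {ffun Sig -> D}}) N l :
  join_reducible_to R N l -> N <= #|D| ^ (#|Sig| - l - 1) -> projoin_reducible (~: R).
Proof.
case=> L [Rs] [N_gt0 covL szL relL ->] le_N.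
pose T := 'I_(#|Sig| - l - 1).
have [sel sel_surj] : exists f : {ffun T -> D} -> 'I_N, forall i, exists u, f u = i.
  by apply: surj_ord; rewrite N_gt0 card_ffun card_ord.
exists T, N, (cofactor_dom T L), (cofactor L Rs sel); split => //.
- exact: covers_cofactor_dom.
- by move=> i; rewrite card_cofactor_dom card_ord; have := szL i; lia.
- by move=> i; apply: rel_on_restr.
- exact: setC_join_projoin.
Qed.

Lemma key_join_reducible (D Sig : finType) (R : {set {ffun Sig -> D}}) K :
  is_key R K -> #|K| + 2 <= #|Sig| -> join_reducible_to R #|~: K| (#|K| + 1).
Proof.
case=> /properP [_ [x0 _ x0K]] key le_K.
have x0C : x0 \in ~: K by rewrite inE.
pose L (i : 'I_#|~: K|) := enum_val i |: K.
have K_L i : {subset K <= L i} by move=> x xK; rewrite inE xK orbT.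
have x_Lx x : x \in ~: K -> x \in L (enum_rank_in x0C x).
  by move=> xC; rewrite !inE enum_rankK_in ?eqxx.
exists L, (fun i => [set restr (L i) a | a in R]); split.
- by apply/card_gt0P; exists x0.
- apply/setP=> x; rewrite inE; apply/bigcupP.
  have [xK | xC] := boolP (x \in K); first by exists (enum_rank_in x0C x0); rewrite ?K_L.
  by exists (enum_rank_in x0C x); rewrite ?x_Lx ?inE.
- move=> i; have := enum_valP i; rewrite inE => iK.
  by rewrite cardsU1 iK; have := cardsC K; lia.
- by move=> i; apply: rel_on_restr.
apply/setP=> a; rewrite inE; apply/idP/forallP => [aR i | a_proj]; first exact: imset_f.
have witness i : exists2 b, b \in R & {in L i, a =1 b}.
  by case/imsetP: (a_proj i) => b bR /restr_eqP eqab; exists b.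
have [b0 b0R eqab0] := witness (enum_rank_in x0C x0).
suff -> : a = b0 by [].
apply/ffunP=> x; have [xK | xC] := boolP (x \in K); first by rewrite eqab0 ?K_L.
have{}xC : x \in ~: K by rewrite inE.
have [b bR eqab] := witness (enum_rank_in x0C x).
have -> : b0 = b by apply: key => // y yK; rewrite -eqab0 ?eqab ?K_L.
by rewrite eqab ?x_Lx.
Qed.

Lemma key_factor_count d c :
  (d = 2 /\ 4 <= c) \/ (3 <= d /\ 3 <= c) -> c <= d ^ (c - 2).
Proof.
have step m : 2 <= d -> 2 <= m -> m <= d ^ (m - 2) -> m.+1 <= d ^ (m.+1 - 2).
  move=> d2 m2 IH; have -> : m.+1 - 2 = (m - 2).+1 by lia.
  by rewrite expnS; nia.
case=> [[d2 c4] | [d3 c3]].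
- elim: c c4 => // c IH; rewrite leq_eqVlt => /predU1P [<- | c4]; first by rewrite d2.
  by apply: step => //; [lia | lia | exact: IH].
- elim: c c3 => // c IH; rewrite leq_eqVlt => /predU1P [<- | c3]; first by rewrite expn1.
  by apply: step => //; [lia | lia | exact: IH].
Qed.

Theorem theorem27 (D Sig : finType) (R : {set {ffun Sig -> D}}) :
  (forall N l : nat,
      join_reducible_to R N l ->
      N <= #|D| ^ (#|Sig| - l - 1) ->
      projoin_reducible (~: R))
  /\
  (forall K : {set Sig},
      is_key R K ->
      (#|D| = 2 /\ #|K| + 4 <= #|Sig|) \/ (3 <= #|D| /\ #|K| + 3 <= #|Sig|) ->
      projoin_reducible (~: R)).
Proof.
split=> [N l | K keyK small_K]; first exact: projoin_reducible_setC_join.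
have cardKC := cardsC K.
apply: (projoin_reducible_setC_join (key_join_reducible keyK _)).
  by case: small_K; lia.
have -> : #|Sig| - (#|K| + 1) - 1 = #|~: K| - 2 by lia.
by apply: key_factor_count; case: small_K; lia.
Qed.
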